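(* There is a constant $c>0$ such that the following holds. Let $f:\mathbb{N}\to\mathbb{R}_{\ge 0}$ and suppose a comparison-based predecessor search algorithm on a sorted array $A$ of size $n$ has the property that, for every sequence of predecessor searches $x_1,\dots,x_m$ and every $y\in A$, the amortized number of comparisons involving $y$ caused by search $x_i$ is at most $f(d(x_i,y))$ (i.e., the total number of comparisons involving $y$ over the sequence is, up to an additive term independent of $m$, at most $\sum_{i=1}^m f(d(x_i,y))$). Then $\sum_{k=1}^{p} f(k)\ge c\log p$ for all $p\le n$.
   Context: A predecessor search with query $x$ in a sorted array $A=A[0],\dots,A[n-1]$ returns the index of the largest element of $A$ smaller than $x$. For a query $x$ and $y\in A$, $d(x,y)$ denotes the number of elements of $A$ between $x$ and $y$ in $A$, inclusive. An element participates in a comparison if it is one of the two elements compared. *)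

From Stdlib Require Import Reals List Arith.
Import ListNotations.
Open Scope R_scope.

Definition strictly_sorted (A : nat -> R) (n : nat) : Prop :=
  forall i j, (i < j < n)%nat -> A i < A j.

(* Correct predecessor answer for query x:
   Some i = index of the largest element of A smaller than x,
   None   = no element of A is smaller than x. *)
Definition is_pred (A : nat -> R) (n : nat) (x : R) (a : option nat) : Prop :=
  match a with
  | Some i => (i < n)%nat /\ A i < x /\ (forall j, (i < j < n)%nat -> x <= A j)
  | None => forall j, (j < n)%nat -> x <= A j
  end.

(* d(x, A j): number of elements of A lying between x and A j, inclusive. *)
Definition inb (lo hi v : R) : bool :=
  if Rle_dec lo v then (if Rle_dec v hi then true else false) else false.

Definition dist_elems (A : nat -> R) (n : nat) (x : R) (j : nat) : nat :=
  length (filter (fun k => inb (Rmin x (A j)) (Rmax x (A j)) (A k)) (seq 0 n)).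

(* One predecessor search of a comparison-based algorithm with memory
   state S: a ternary decision tree.  [Node j t_lt t_eq t_gt] compares the
   query x with the array element A j; a leaf returns the answer and the
   new memory state. *)
Inductive dtree (S : Type) : Type :=
| Leaf : option nat -> S -> dtree S
| Node : nat -> dtree S -> dtree S -> dtree S -> dtree S.
Arguments Leaf {S}.
Arguments Node {S}.

Fixpoint valid_tree {S : Type} (n : nat) (t : dtree S) : Prop :=
  match t with
  | Leaf _ _ => True
  | Node j t1 t2 t3 => (j < n)%nat /\ valid_tree n t1 /\ valid_tree n t2 /\ valid_tree n t3
  end.

(* Execute a tree on query x: (answer, new state, list of array indices
   that participated in a comparison, with multiplicity). *)
Fixpoint eval_tree {S : Type} (A : nat -> R) (x : R) (t : dtree S)
  : option nat * S * list nat :=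
  match t with
  | Leaf a s => (a, s, [])
  | Node j t1 t2 t3 =>
      match total_order_T x (A j) with
      | inleft (left _) => let '(a, s, tr) := eval_tree A x t1 in (a, s, j :: tr)
      | inleft (right _) => let '(a, s, tr) := eval_tree A x t2 in (a, s, j :: tr)
      | inright _ => let '(a, s, tr) := eval_tree A x t3 in (a, s, j :: tr)
      end
  end.

Fixpoint run {S : Type} (A : nat -> R) (alg : S -> dtree S) (s : S) (xs : list R)
  : list (option nat * list nat) :=
  match xs with
  | [] => []
  | x :: xs' =>
      let '(a, s', tr) := eval_tree A x (alg s) in (a, tr) :: run A alg s' xs'
  end.

Definition involvements (j : nat) (r : list (option nat * list nat)) : nat :=
  fold_right Nat.add 0%nat (map (fun p => count_occ Nat.eq_dec (snd p) j) r).

Definition sumR (l : list R) : R := fold_right Rplus 0 l.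

(* Fix p <= n
   and the "probe" queries q_0, ..., q_(p-1), where q_i lies strictly between
   A(i-1) and A(i) (below A(0) for i = 0).  Their predecessor answers are
   pairwise distinct, and every probe lies below A(j) for j >= p, so a
   comparison with such an A(j) cannot distinguish probes.  A ternary decision
   tree that separates a set I of probes therefore makes, on SOME probe of I,
   at least log_3 |I| comparisons with the "window" A(0), ..., A(p-1).
   Repeating this against the algorithm's current memory state yields, for
   every m, m searches whose total number W of window comparisons satisfies
   p^m <= 3^W.  On the other hand, the amortized hypothesis bounds W by
   p*C + m * 2 * (f(1) + ... + f(p)), because from any probe the distances to
   the window elements are 1..i and 1..(p-i).  Letting m grow gives
   ln p <= 2 ln 3 * (f(1) + ... + f(p)), i.e. the theorem with c = 1/(2 ln 3). *)

From Stdlib Require Import Reals List Arith Lia Lra.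
Import ListNotations.
Open Scope R_scope.

(** * Finite sums *)

Lemma list_sum_map_add {T : Type} (f g : T -> nat) (l : list T) :
  list_sum (map (fun x => f x + g x)%nat l) = (list_sum (map f l) + list_sum (map g l))%nat.
Proof. induction l as [|a l IH]; simpl; [reflexivity|]. rewrite IH. lia. Qed.

Lemma list_sum_indicator (a p : nat) :
  list_sum (map (fun j => if Nat.eq_dec a j then 1%nat else 0%nat) (seq 0 p))
  = if (a <? p)%nat then 1%nat else 0%nat.
Proof.
  induction p as [|p IH]; [simpl; destruct (Nat.ltb_spec a 0); lia|].
  rewrite seq_S, map_app, list_sum_app, IH. simpl.
  destruct (Nat.eq_dec a p); destruct (Nat.ltb_spec a p); destruct (Nat.ltb_spec a (S p)); lia.
Qed.

Lemma INR_list_sum (l : list nat) : INR (list_sum l) = sumR (map INR l).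
Proof. induction l as [|a l IH]; simpl; [reflexivity|]. rewrite plus_INR, IH. reflexivity. Qed.

Lemma sumR_app (l1 l2 : list R) : sumR (l1 ++ l2) = sumR l1 + sumR l2.
Proof. induction l1 as [|a l IH]; simpl; [lra|]. rewrite IH. lra. Qed.

Lemma sumR_rev (l : list R) : sumR (rev l) = sumR l.
Proof. induction l as [|a l IH]; simpl; [reflexivity|]. rewrite sumR_app, IH. simpl. lra. Qed.

Lemma sumR_map_plus {T : Type} (f g : T -> R) (l : list T) :
  sumR (map (fun x => f x + g x) l) = sumR (map f l) + sumR (map g l).
Proof. induction l as [|a l IH]; simpl; [lra|]. rewrite IH. lra. Qed.

Lemma sumR_const {T : Type} (c : R) (l : list T) :
  sumR (map (fun _ => c) l) = INR (length l) * c.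
Proof.
  induction l as [|a l IH]; [simpl; lra|].
  rewrite map_cons. cbn [length]. rewrite S_INR, Rmult_plus_distr_r, <- IH. simpl. lra.
Qed.

Lemma sumR_le {T : Type} (f g : T -> R) (l : list T) :
  (forall x, In x l -> f x <= g x) -> sumR (map f l) <= sumR (map g l).
Proof.
  induction l as [|a l IH]; simpl; intros H; [lra|].
  pose proof (H a (or_introl eq_refl)). pose proof (IH (fun x Hx => H x (or_intror Hx))). lra.
Qed.

Lemma sumR_swap {T U : Type} (g : T -> U -> R) (l1 : list T) (l2 : list U) :
  sumR (map (fun y => sumR (map (fun x => g x y) l1)) l2) =
  sumR (map (fun x => sumR (map (fun y => g x y) l2)) l1).
Proof.
  induction l1 as [|a l1 IH]; simpl.
  - induction l2 as [|b l2 IH2]; simpl; [reflexivity|]. rewrite IH2. lra.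
  - rewrite sumR_map_plus, IH. reflexivity.
Qed.

Lemma sumR_nonneg {T : Type} (f : T -> R) (l : list T) :
  (forall x, 0 <= f x) -> 0 <= sumR (map f l).
Proof. intros H. induction l as [|a l IH]; simpl; [lra|]. pose proof (H a). lra. Qed.

Lemma prefix_sum_mono (f : nat -> R) (k p : nat) :
  (forall k, 0 <= f k) -> (k <= p)%nat ->
  sumR (map f (seq 1 k)) <= sumR (map f (seq 1 p)).
Proof.
  intros Hf Hk. replace p with (k + (p - k))%nat by lia.
  rewrite seq_app, map_app, sumR_app.
  pose proof (sumR_nonneg f (seq (1 + k) (p - k)) Hf). lra.
Qed.

(* The distances from a point to the elements on its left, read left to right. *)
Lemma map_sub_seq (i : nat) : map (fun j => i - j)%nat (seq 0 i) = rev (seq 1 i).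
Proof.
  induction i as [|i IH]; [reflexivity|].
  change (seq 0 (S i)) with (0%nat :: seq 1 i).
  rewrite <- seq_shift, (seq_S i 1), rev_app_distr. cbn [map rev app].
  rewrite map_map. replace (S i - 0)%nat with (S i) by lia. replace (1 + i)%nat with (S i) by lia.
  f_equal. rewrite <- IH. reflexivity.
Qed.

(* The distances from a point to the elements on its right. *)
Lemma map_succ_sub_seq (i a k : nat) :
  map (fun j => S j - i)%nat (seq (i + a) k) = seq (S a) k.
Proof.
  revert a. induction k as [|k IH]; intros a; [reflexivity|]. cbn [seq map].
  replace (S (i + a)) with (i + S a)%nat by lia.
  rewrite IH. f_equal. lia.
Qed.

(** * Sorted arrays and probe queries *)

Section Probes.
Variables (A : nat -> R) (n : nat).
Hypothesis sortedA : strictly_sorted A n.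

Lemma sorted_le_mono (i j : nat) : (j < n)%nat -> (i <= j)%nat -> A i <= A j.
Proof. intros Hj Hij. destruct (Nat.eq_dec i j); [subst; lra|]. left. apply sortedA. lia. Qed.

Lemma sorted_le_reflect (i j : nat) :
  (i < n)%nat -> (j < n)%nat -> A i <= A j -> (i <= j)%nat.
Proof.
  intros Hi Hj H. destruct (le_lt_dec i j) as [|Hji]; [assumption|].
  assert (A j < A i) by (apply sortedA; lia). lra.
Qed.

Definition probe (i : nat) : R :=
  match i with 0%nat => A 0%nat - 1 | S i' => (A i' + A (S i')) / 2 end.

Definition probe_answer (i : nat) : option nat :=
  match i with 0%nat => None | S i' => Some i' end.

Lemma probe_answer_inj (i k : nat) : probe_answer i = probe_answer k -> i = k.
Proof. destruct i, k; simpl; congruence. Qed.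

Lemma probe_lt (i : nat) : (i < n)%nat -> probe i < A i.
Proof.
  intros Hi. destruct i; simpl; [lra|].
  assert (A i < A (S i)) by (apply sortedA; lia). lra.
Qed.

Lemma probe_gt (i : nat) : (S i < n)%nat -> A i < probe (S i).
Proof. intros Hi. simpl. assert (A i < A (S i)) by (apply sortedA; lia). lra. Qed.

Lemma probe_below (i k : nat) : (i < n)%nat -> (k < n)%nat -> (i <= k)%nat -> probe i < A k.
Proof.
  intros Hi Hk Hik. pose proof (probe_lt i Hi). pose proof (sorted_le_mono i k Hk Hik). lra.
Qed.

Lemma probe_above (i k : nat) : (i < n)%nat -> (k < i)%nat -> A k < probe i.
Proof.
  intros Hi Hk. destruct i as [|i]; [lia|].
  pose proof (probe_gt i Hi). pose proof (sorted_le_mono k i ltac:(lia) ltac:(lia)). lra.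
Qed.

Lemma probe_le_iff (i k : nat) : (i < n)%nat -> (k < n)%nat ->
  (probe i <= A k <-> (i <= k)%nat).
Proof.
  intros Hi Hk. split; intros H.
  - destruct (le_lt_dec i k) as [|Hki]; [assumption|].
    pose proof (probe_above i k Hi Hki). lra.
  - left. apply probe_below; assumption.
Qed.

Lemma is_pred_probe (i : nat) (a : option nat) :
  (i < n)%nat -> is_pred A n (probe i) a -> a = probe_answer i.
Proof.
  intros Hi H. destruct a as [m|]; simpl in H.
  - destruct H as [Hm [Hlt Hnext]].
    assert (m < i)%nat.
    { destruct (le_lt_dec i m) as [Him|]; [|assumption].
      pose proof (probe_below i m Hi Hm Him). lra. }
    destruct i as [|i]; [lia|]. simpl. f_equal.
    destruct (Nat.eq_dec m i) as [|Hmi]; [assumption|].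
    assert (probe (S i) <= A i) by (apply Hnext; lia).
    pose proof (probe_gt i Hi). lra.
  - destruct i as [|i]; [reflexivity|].
    assert (probe (S i) <= A i) by (apply H; lia).
    pose proof (probe_gt i Hi). lra.
Qed.

Lemma dist_elems_interval (x : R) (j a b : nat) :
  (forall k, (k < n)%nat -> (Rmin x (A j) <= A k <= Rmax x (A j) <-> (a <= k <= b)%nat)) ->
  (a <= b < n)%nat -> dist_elems A n x j = (S b - a)%nat.
Proof.
  intros Hiff Hab. unfold dist_elems.
  assert (Hcount : forall m, (m <= n)%nat ->
    length (filter (fun k => inb (Rmin x (A j)) (Rmax x (A j)) (A k)) (seq 0 m))
    = (Nat.min m (S b) - Nat.min m a)%nat).
  { induction m as [|m IH]; intros Hm; [simpl; lia|].
    rewrite seq_S, filter_app, length_app, IH, Nat.add_0_l by lia. cbn [filter]. unfold inb.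
    destruct (Rle_dec (Rmin x (A j)) (A m)); [destruct (Rle_dec (A m) (Rmax x (A j)))|]; cbn [length].
    - assert (a <= m <= b)%nat by (apply Hiff; [lia|split; assumption]). lia.
    - assert (~ (a <= m <= b)%nat) by (intros C; apply Hiff in C as [? ?]; [lra|lia]). lia.
    - assert (~ (a <= m <= b)%nat) by (intros C; apply Hiff in C as [? ?]; [lra|lia]). lia. }
  rewrite Hcount by lia. lia.
Qed.

Lemma dist_probe (i j : nat) : (i < n)%nat -> (j < n)%nat ->
  dist_elems A n (probe i) j = if (i <=? j)%nat then (S j - i)%nat else (i - j)%nat.
Proof.
  intros Hi Hj. destruct (Nat.leb_spec i j) as [Hij|Hji].
  - apply (dist_elems_interval _ _ i j); [|lia]. intros k Hk.
    assert (probe i <= A j) by (apply probe_le_iff; assumption).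
    rewrite Rmin_left, Rmax_right, (probe_le_iff i k Hi Hk) by assumption.
    split; intros [H1 H2]; split; try assumption.
    + apply (sorted_le_reflect k j Hk Hj H2).
    + apply (sorted_le_mono k j Hj H2).
  - replace (i - j)%nat with (S (i - 1) - j)%nat by lia.
    apply (dist_elems_interval _ _ j (i - 1)); [|lia]. intros k Hk.
    assert (A j <= probe i) by (left; apply probe_above; assumption).
    rewrite Rmin_right, Rmax_left by assumption.
    split; intros [H1 H2]; split.
    + apply (sorted_le_reflect j k); assumption.
    + destruct (le_lt_dec i k) as [Hik|]; [|lia].
      pose proof (probe_below i k Hi Hk Hik). lra.
    + apply sorted_le_mono; assumption.
    + left. apply probe_above; [assumption|lia].
Qed.

(* Seen from a probe inside the window [0, p), the distances to the window
   elements are 1..i on one side and 1..(p-i) on the other. *)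
Lemma window_distance_sum (p : nat) (f : nat -> R) (i : nat) :
  (p <= n)%nat -> (i < p)%nat -> (forall k, 0 <= f k) ->
  sumR (map (fun j => f (dist_elems A n (probe i) j)) (seq 0 p))
  <= 2 * sumR (map f (seq 1 p)).
Proof.
  intros Hpn Hip Hf.
  replace p with (i + (p - i))%nat at 1 by lia.
  rewrite seq_app, map_app, sumR_app.
  rewrite (map_ext_in _ (fun j => f (i - j)%nat) (seq 0 i)).
  2: { intros j Hj. apply in_seq in Hj.
       rewrite dist_probe by lia. destruct (Nat.leb_spec i j); [lia|reflexivity]. }
  rewrite (map_ext_in _ (fun j => f (S j - i)%nat) (seq (0 + i) (p - i))).
  2: { intros j Hj. apply in_seq in Hj.
       rewrite dist_probe by lia. destruct (Nat.leb_spec i j); [reflexivity|lia]. }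
  rewrite <- (map_map (fun j => i - j)%nat f), map_sub_seq, map_rev, sumR_rev.
  replace (0 + i)%nat with (i + 0)%nat by lia.
  rewrite <- (map_map (fun j => S j - i)%nat f), map_succ_sub_seq.
  pose proof (prefix_sum_mono f i p Hf ltac:(lia)).
  pose proof (prefix_sum_mono f (p - i) p Hf ltac:(lia)). lra.
Qed.

End Probes.

(** * Decision trees *)

Definition branch {T : Type} (x a : R) (t1 t2 t3 : T) : T :=
  if Rlt_dec x a then t1 else if Req_dec_T x a then t2 else t3.

Definition outcome (x a : R) : nat := branch x a 0%nat 1%nat 2%nat.

Lemma outcome_lt3 (x a : R) : (outcome x a < 3)%nat.
Proof. unfold outcome, branch. destruct Rlt_dec; [|destruct Req_dec_T]; lia. Qed.

Lemma branch_outcome {T : Type} (x a : R) (t1 t2 t3 : T) :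
  branch x a t1 t2 t3 =
  match outcome x a with 0%nat => t1 | 1%nat => t2 | _ => t3 end.
Proof. unfold outcome, branch. destruct Rlt_dec; [|destruct Req_dec_T]; reflexivity. Qed.

Section Trees.
Variables (S : Type) (A : nat -> R).

Definition answer (t : dtree S) (x : R) : option nat := fst (fst (eval_tree A x t)).
Definition trace (t : dtree S) (x : R) : list nat := snd (eval_tree A x t).

Lemma answer_node (x : R) (j : nat) (t1 t2 t3 : dtree S) :
  answer (Node j t1 t2 t3) x = answer (branch x (A j) t1 t2 t3) x.
Proof.
  unfold answer, branch. simpl.
  destruct (total_order_T x (A j)) as [[H|H]|H];
    destruct Rlt_dec; try lra; try (destruct Req_dec_T; try lra);
    destruct (eval_tree A x _) as [[a s] tr]; reflexivity.
Qed.

Lemma trace_node (x : R) (j : nat) (t1 t2 t3 : dtree S) :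
  trace (Node j t1 t2 t3) x = j :: trace (branch x (A j) t1 t2 t3) x.
Proof.
  unfold trace, branch. simpl.
  destruct (total_order_T x (A j)) as [[H|H]|H];
    destruct Rlt_dec; try lra; try (destruct Req_dec_T; try lra);
    destruct (eval_tree A x _) as [[a s] tr]; reflexivity.
Qed.

Definition window_comparisons (p : nat) (tr : list nat) : nat :=
  length (filter (fun j => (j <? p)%nat) tr).

Variables (n p : nat) (query : nat -> R).

(* [t] separates the queries indexed by [I]: each window comparison splits
   [I] at most three ways and all other comparisons do not split it at all, so
   some query of [I] makes at least log_3 |I| window comparisons. *)
Definition separation_bound (t : dtree S) : Prop :=
  forall I : list nat, NoDup I -> I <> [] ->
  (forall i j, In i I -> (p <= j < n)%nat -> query i < A j) ->
  (forall i k, In i I -> In k I -> answer t (query i) = answer t (query k) -> i = k) ->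
  exists i, In i I /\ (length I <= 3 ^ window_comparisons p (trace t (query i)))%nat.

Lemma separation_bound_leaf (a : option nat) (s : S) : separation_bound (Leaf a s).
Proof.
  intros I HI Hne _ Hinj. destruct I as [|i0 [|i1 I]]; [congruence| |].
  - exists i0. split; [left; reflexivity|]. simpl. lia.
  - exfalso. inversion HI as [|? ? Hnot]. apply Hnot. left. symmetry.
    apply Hinj; simpl; auto.
Qed.

(* A comparison outside the window sends every query to the first child. *)
Lemma separation_bound_node_outside (j : nat) (t1 t2 t3 : dtree S) :
  (p <= j < n)%nat -> separation_bound t1 -> separation_bound (Node j t1 t2 t3).
Proof.
  intros Hj IH1 I HI Hne Hbelow Hinj.
  assert (Hfirst : forall i, In i I -> branch (query i) (A j) t1 t2 t3 = t1).
  { intros i Hi. unfold branch. destruct Rlt_dec as [|Hnlt]; [reflexivity|].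
    exfalso. apply Hnlt, Hbelow; assumption. }
  destruct (IH1 I HI Hne Hbelow) as [i [Hi Hlen]].
  { intros i k Hi Hk E. apply Hinj; [assumption|assumption|].
    rewrite !answer_node, (Hfirst i Hi), (Hfirst k Hk). assumption. }
  exists i. split; [assumption|].
  unfold window_comparisons in *. rewrite trace_node, (Hfirst i Hi). simpl.
  destruct (Nat.ltb_spec j p); [lia|assumption].
Qed.

(* A window comparison: the child receiving at least a third of [I] pays one
   extra comparison, which covers the factor 3. *)
Lemma separation_bound_node_window (j : nat) (t1 t2 t3 tk : dtree S) (k : nat) (I : list nat) :
  (j < p)%nat -> separation_bound tk ->
  (forall i, outcome (query i) (A j) = k -> branch (query i) (A j) t1 t2 t3 = tk) ->
  (length I <= 3 * length (filter (fun i => outcome (query i) (A j) =? k)%nat I))%nat ->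
  NoDup I -> I <> [] ->
  (forall i j', In i I -> (p <= j' < n)%nat -> query i < A j') ->
  (forall i i', In i I -> In i' I ->
     answer (Node j t1 t2 t3) (query i) = answer (Node j t1 t2 t3) (query i') -> i = i') ->
  exists i, In i I /\
    (length I <= 3 ^ window_comparisons p (trace (Node j t1 t2 t3) (query i)))%nat.
Proof.
  intros Hjp IHk Hchild Hthird HI Hne Hbelow Hinj.
  set (Ik := filter (fun i => outcome (query i) (A j) =? k)%nat I) in *.
  assert (HIk : forall i, In i Ik -> In i I /\ branch (query i) (A j) t1 t2 t3 = tk).
  { intros i Hi. apply filter_In in Hi as [Hi Hk].
    split; [assumption|]. apply Hchild, Nat.eqb_eq, Hk. }
  destruct (IHk Ik) as [i [Hi Hlen]].
  - apply NoDup_filter, HI.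
  - intros E. rewrite E in Hthird. destruct I; [congruence|simpl in Hthird; lia].
  - intros i j' Hi. apply Hbelow, HIk, Hi.
  - intros i k' Hi Hk' E. apply Hinj; [apply HIk, Hi|apply HIk, Hk'|].
    rewrite !answer_node, (proj2 (HIk i Hi)), (proj2 (HIk k' Hk')). assumption.
  - exists i. split; [apply HIk, Hi|].
    unfold window_comparisons in *. rewrite trace_node, (proj2 (HIk i Hi)). simpl.
    destruct (Nat.ltb_spec j p); [|lia]. simpl. lia.
Qed.

Lemma outcome_class_third (o : nat -> nat) (I : list nat) :
  (forall i, (o i < 3)%nat) ->
  exists k, (k < 3)%nat /\ (length I <= 3 * length (filter (fun i => o i =? k)%nat I))%nat.
Proof.
  intros Ho.
  assert (Hsplit : (length I <= length (filter (fun i => o i =? 0)%nat I)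
                     + length (filter (fun i => o i =? 1)%nat I)
                     + length (filter (fun i => o i =? 2)%nat I))%nat).
  { induction I as [|a I IH]; simpl; [lia|].
    pose proof (Ho a). destruct (o a) as [|[|[|]]]; simpl; lia. }
  destruct (le_lt_dec (length I) (3 * length (filter (fun i => o i =? 0)%nat I))).
  { exists 0%nat. split; [lia|assumption]. }
  destruct (le_lt_dec (length I) (3 * length (filter (fun i => o i =? 1)%nat I))).
  { exists 1%nat. split; [lia|assumption]. }
  exists 2%nat. split; lia.
Qed.

Lemma tree_separation_bound (t : dtree S) : valid_tree n t -> separation_bound t.
Proof.
  induction t as [a s | j t1 IH1 t2 IH2 t3 IH3]; intros Hv; [apply separation_bound_leaf|].
  destruct Hv as [Hj [V1 [V2 V3]]].
  destruct (le_lt_dec p j) as [Hpj|Hjp].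
  { apply separation_bound_node_outside; [lia|apply IH1, V1]. }
  intros I HI Hne Hbelow Hinj.
  destruct (outcome_class_third (fun i => outcome (query i) (A j)) I
              (fun i => outcome_lt3 _ _)) as [k [Hk Hthird]].
  assert (Hk3 : k = 0%nat \/ k = 1%nat \/ k = 2%nat) by lia.
  destruct Hk3 as [Hk0 | [Hk1 | Hk2]]; subst k;
    [ apply (separation_bound_node_window j t1 t2 t3 t1 0%nat I Hjp (IH1 V1))
    | apply (separation_bound_node_window j t1 t2 t3 t2 1%nat I Hjp (IH2 V2))
    | apply (separation_bound_node_window j t1 t2 t3 t3 2%nat I Hjp (IH3 V3)) ];
    try assumption; intros i Hi; rewrite branch_outcome, Hi; reflexivity.
Qed.

End Trees.

(** * The adversary *)

Definition correct_from (A : nat -> R) (n : nat) {S : Type} (alg : S -> dtree S) (s : S) : Prop :=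
  forall xs : list R, Forall2 (fun x r => is_pred A n x (fst r)) xs (run A alg s xs).

Lemma correct_from_step (A : nat -> R) (n : nat) {S : Type} (alg : S -> dtree S)
    (s : S) (x : R) (a : option nat) (s' : S) (tr : list nat) :
  correct_from A n alg s -> eval_tree A x (alg s) = (a, s', tr) ->
  is_pred A n x a /\ correct_from A n alg s'.
Proof.
  intros C E. split.
  - specialize (C [x]). simpl in C. rewrite E in C. inversion C. assumption.
  - intros xs. specialize (C (x :: xs)). simpl in C. rewrite E in C. inversion C. assumption.
Qed.

Lemma correct_answer_probe (A : nat -> R) (n : nat) {S : Type} (alg : S -> dtree S)
    (s : S) (i : nat) :
  strictly_sorted A n -> (i < n)%nat -> correct_from A n alg s ->
  answer S A (alg s) (probe A i) = probe_answer i.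
Proof.
  intros HS Hi C. unfold answer.
  destruct (eval_tree A (probe A i) (alg s)) as [[a s'] tr] eqn:E. simpl.
  apply (is_pred_probe A n HS i a Hi), (correct_from_step A n alg s _ _ _ _ C E).
Qed.

Definition window_cost (p : nat) (r : list (option nat * list nat)) : nat :=
  list_sum (map (fun j => involvements j r) (seq 0 p)).

Lemma window_comparisons_count (p : nat) (tr : list nat) :
  window_comparisons p tr = list_sum (map (count_occ Nat.eq_dec tr) (seq 0 p)).
Proof.
  induction tr as [|a tr IH].
  - unfold window_comparisons. simpl. induction (seq 0 p); simpl; auto.
  - rewrite (map_ext (fun j => count_occ Nat.eq_dec (a :: tr) j)
               (fun j => (if Nat.eq_dec a j then 1 else 0) + count_occ Nat.eq_dec tr j)%nat)
      by (intros j; simpl; destruct (Nat.eq_dec a j); reflexivity).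
    rewrite list_sum_map_add, list_sum_indicator, <- IH.
    unfold window_comparisons. simpl. destruct (a <? p)%nat; reflexivity.
Qed.

Lemma window_cost_cons (p : nat) (a : option nat) (tr : list nat) (r : list (option nat * list nat)) :
  window_cost p ((a, tr) :: r) = (window_comparisons p tr + window_cost p r)%nat.
Proof.
  unfold window_cost, involvements. simpl. rewrite list_sum_map_add, window_comparisons_count.
  reflexivity.
Qed.

Lemma adversary_sequence (A : nat -> R) (n p : nat) {S : Type} (alg : S -> dtree S) :
  strictly_sorted A n -> (1 <= p <= n)%nat -> (forall s, valid_tree n (alg s)) ->
  forall m s, correct_from A n alg s ->
  exists xs, length xs = m /\ (forall x, In x xs -> exists i, (i < p)%nat /\ x = probe A i) /\
    (p ^ m <= 3 ^ window_cost p (run A alg s xs))%nat.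
Proof.
  intros HS Hp Hv m. induction m as [|m IH]; intros s C.
  { exists []. repeat split; [intros x []|]. simpl. apply Nat.neq_0_lt_0, Nat.pow_nonzero. lia. }
  destruct (tree_separation_bound S A n p (probe A) (alg s) (Hv s) (seq 0 p))
    as [i [Hi Hlen]].
  - apply seq_NoDup.
  - destruct p; [lia|]. simpl. congruence.
  - intros i j Hi Hj. apply in_seq in Hi. apply (probe_below A n HS); lia.
  - intros i k Hi Hk E. apply in_seq in Hi. apply in_seq in Hk.
    rewrite !(correct_answer_probe A n alg s) in E by (assumption || lia).
    apply probe_answer_inj, E.
  - rewrite length_seq in Hlen. apply in_seq in Hi. unfold trace in Hlen.
    destruct (eval_tree A (probe A i) (alg s)) as [[a1 s1] tr1] eqn:E1.
    destruct (correct_from_step A n alg s _ _ _ _ C E1) as [_ C1].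
    destruct (IH s1 C1) as [xs [Hxs [Hprobes Hpow]]].
    exists (probe A i :: xs). split; [simpl; congruence|]. split.
    + intros x [Hx|Hx]; [exists i; split; [lia|congruence]|auto].
    + simpl. rewrite E1, window_cost_cons, Nat.pow_add_r. simpl in Hlen.
      apply Nat.mul_le_mono; assumption.
Qed.

(** * Upper bound on the window cost *)

Lemma window_cost_upper (A : nat -> R) (n p : nat) (f : nat -> R) (C : R)
    (r : list (option nat * list nat)) (xs : list R) :
  strictly_sorted A n -> (p <= n)%nat -> (forall k, 0 <= f k) ->
  (forall j, (j < n)%nat -> INR (involvements j r)
     <= C + sumR (map (fun x => f (dist_elems A n x j)) xs)) ->
  (forall x, In x xs -> exists i, (i < p)%nat /\ x = probe A i) ->
  INR (window_cost p r) <= INR p * C + INR (length xs) * (2 * sumR (map f (seq 1 p))).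
Proof.
  intros HS Hpn Hf Hinv Hprobes.
  unfold window_cost. rewrite INR_list_sum, map_map.
  eapply Rle_trans.
  { apply (sumR_le _ (fun j => C + sumR (map (fun x => f (dist_elems A n x j)) xs))).
    intros j Hj. apply in_seq in Hj. apply Hinv. lia. }
  rewrite (sumR_map_plus (fun _ => C)), sumR_const, length_seq,
          (sumR_swap (fun x j => f (dist_elems A n x j))), <- sumR_const.
  apply Rplus_le_compat_l, sumR_le. intros x Hx.
  destruct (Hprobes x Hx) as [i [Hi ->]]. apply window_distance_sum; assumption.
Qed.

Lemma ln_le_of_nat_pow_le (a b m w : nat) :
  (0 < a)%nat -> (0 < b)%nat -> (a ^ m <= b ^ w)%nat ->
  INR m * ln (INR a) <= INR w * ln (INR b).
Proof.
  intros Ha Hb Hpow. apply le_INR in Hpow. rewrite !pow_INR in Hpow.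
  apply lt_0_INR in Ha, Hb.
  rewrite <- !ln_pow by assumption.
  destruct Hpow as [Hlt|Heq].
  - left. apply ln_increasing; [apply pow_lt|]; assumption.
  - rewrite Heq. lra.
Qed.

Lemma slope_le_of_linear_bound (a b c : R) :
  (forall m : nat, INR m * a <= b + INR m * c) -> a <= c.
Proof.
  intros H. destruct (Rle_lt_dec a c) as [|Hca]; [assumption|exfalso].
  destruct (INR_archimed (a - c) b ltac:(lra)) as [m Hm].
  specialize (H m). nra.
Qed.

Theorem theorem3 :
  exists c : R, c > 0 /\
  forall (n : nat) (arr : nat -> R) (f : nat -> R)
         (S : Type) (alg : S -> dtree S) (s0 : S),
    strictly_sorted arr n ->
    (forall k, 0 <= f k) ->
    (forall s, valid_tree n (alg s)) ->
    (forall xs : list R,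
        Forall2 (fun x r => is_pred arr n x (fst r)) xs (run arr alg s0 xs)) ->
    (exists C : R, forall (xs : list R) (j : nat), (j < n)%nat ->
        INR (involvements j (run arr alg s0 xs))
          <= C + sumR (map (fun x => f (dist_elems arr n x j)) xs)) ->
    forall p : nat, (1 <= p <= n)%nat ->
      c * ln (INR p) <= sumR (map f (seq 1 p)).
Proof.
  assert (Hln3 : 0 < ln 3) by (rewrite <- ln_1; apply ln_increasing; lra).
  exists (/ (2 * ln 3)). split; [apply Rlt_gt, Rinv_0_lt_compat; lra|].
  intros n arr f S alg s0 HS Hf Hv Hcorrect [C HC] p Hp.
  set (F := sumR (map f (seq 1 p))).
  (* For every m: m ln p <= W ln 3 <= ln 3 (p C + m 2F). *)
  assert (Hslope : ln (INR p) <= 2 * ln 3 * F).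
  { apply (slope_le_of_linear_bound _ (ln 3 * (INR p * C))). intros m.
    destruct (adversary_sequence arr n p alg HS Hp Hv m s0 Hcorrect)
      as [xs [Hlen [Hprobes Hpow]]].
    set (W := window_cost p (run arr alg s0 xs)) in *.
    assert (Hlog : INR m * ln (INR p) <= INR W * ln 3).
    { replace 3 with (INR 3) by (simpl; lra). apply ln_le_of_nat_pow_le; [lia|lia|assumption]. }
    assert (Hupper : INR W <= INR p * C + INR m * (2 * F)).
    { rewrite <- Hlen. apply (window_cost_upper arr n); try assumption; [lia|].
      intros j Hj. apply HC, Hj. }
    apply Rmult_le_compat_r with (r := ln 3) in Hupper; lra. }
  apply Rmult_le_reg_l with (2 * ln 3); [lra|].
  rewrite <- Rmult_assoc, Rinv_r by lra. lra.
Qed.
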